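(* Let $\hat x^{(1)},\hat x^{(2)}\in\mathcal{X}$ be distinct and $\hat w_2\in\mathbb{R}$, and let $\hat w_1=\frac{\hat x^{(2)}-\hat x^{(1)}}{\|\hat x^{(2)}-\hat x^{(1)}\|}$. For any $\epsilon>0$ there exist $M\in\mathbb{N}_{>0}$, $M$ pairs of distinct points $(x^{(2)}_i,x^{(1)}_i)\in\mathcal{X}\times\mathcal{X}$ and scalars $\tilde w_i\in\mathbb{R}$, $i=1,\dots,M$, such that for all $x\in\mathcal{X}$ $$\left|\hat w_2\,\phi(\langle\hat w_1,x-\hat x^{(1)}\rangle)-\sum_{i=1}^M\tilde w_i\left[\psi(\langle w_i,x-x^{(1)}_i\rangle-s_2)+1\right]\right|<\epsilon,$$ where $w_i=s_1\frac{x^{(2)}_i-x^{(1)}_i}{\|x^{(2)}_i-x^{(1)}_i\|^2}$.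
   Context: $\phi(t)=\max\{t,0\}$, $\psi=\tanh$, $s_2=\frac{\ln3}{2}$, $s_1=2s_2=\ln 3$. Euclidean norm and inner product on $\mathbb{R}^D$. For $A\subseteq\mathbb{R}^D$ let $d(z,A)=\inf_{a\in A}\|z-a\|$, $\mathrm{Med}(A)=\{z:\exists p\neq q\in A,\ \|p-z\|=\|q-z\|=d(z,A)\}$, reach $\tau_A=\inf_{a\in A}d(a,\mathrm{Med}(A))$. Let $\mathcal{X}'\subset\mathbb{R}^D$ be nonempty compact with $\tau_{\mathcal{X}'}>0$, fix $0<\epsilon_I<\min\{\tau_{\mathcal{X}'},1\}$, and $\mathcal{X}=\{x:d(x,\mathcal{X}')\le\epsilon_I\}$. *)

From Stdlib Require Import Reals.
From mathcomp Require Import ssreflect ssrfun ssrbool eqtype ssrnat seq fintype bigop.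
Open Scope R_scope.

Definition vec (D : nat) := 'I_D -> R.

Definition vsub {D} (x y : vec D) : vec D := fun i => x i - y i.
Definition inner {D} (x y : vec D) : R := \big[Rplus/0]_(i < D) (x i * y i).
Definition vnorm {D} (x : vec D) : R := sqrt (inner x x).
Definition vscale {D} (c : R) (x : vec D) : vec D := fun i => c * x i.

(* phi = ReLU; psi = Stdlib Rtrigo_def.tanh *)
Definition relu (t : R) : R := Rmax t 0.
Definition s2 : R := ln 3 / 2.
Definition s1 : R := ln 3.

Definition is_dist {D} (A : vec D -> Prop) (z : vec D) (r : R) : Prop :=
  (forall a, A a -> r <= vnorm (vsub z a)) /\
  (forall e, 0 < e -> exists a, A a /\ vnorm (vsub z a) < r + e).

Definition Med {D} (A : vec D -> Prop) (z : vec D) : Prop :=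
  exists p q, p <> q /\ A p /\ A q /\
    vnorm (vsub p z) = vnorm (vsub q z) /\ is_dist A z (vnorm (vsub p z)).

(* e < tau_A = inf_{a in A} d(a, Med A)  (tau_A may be +infinity) *)
Definition reach_gt {D} (A : vec D -> Prop) (e : R) : Prop :=
  exists r, e < r /\ forall a m, A a -> Med A m -> r <= vnorm (vsub a m).

(* compactness in R^D (Heine-Borel: closed and bounded) *)
Definition vclosed {D} (A : vec D -> Prop) : Prop :=
  forall z, ~ A z -> exists e, 0 < e /\ forall a, A a -> e <= vnorm (vsub z a).
Definition vbounded {D} (A : vec D -> Prop) : Prop :=
  exists B, forall a, A a -> vnorm a <= B.
Definition vcompact {D} (A : vec D -> Prop) : Prop := vclosed A /\ vbounded A.

Definition thicken {D} (A : vec D -> Prop) (eps : R) (x : vec D) : Prop :=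
  exists r, is_dist A x r /\ r <= eps.

From HB Require Import structures.
From Stdlib Require Import Reals Lra FunctionalExtensionality Classical.
From mathcomp Require Import ssreflect ssrfun ssrbool eqtype ssrnat seq fintype bigop.
From mathcomp Require Import zify.
Open Scope R_scope.

(* Fix a in X' and the unit vector u = w1.  The points a + r u with |r| <= epsI lie in X, and a
   tanh unit anchored at a + r1 u and a + r2 u depends on x only through t = <u, x - a>: it is
   2 / (1 + k exp (- beta t)) with beta = 2 s1 / (r2 - r1) and k = 3 exp (beta r1).  For a fixed
   slope beta these units only reach k in a bounded interval, but their linear span approximates
   1 / (1 + K exp (- beta t)) for every K > 0: divided differences over distinct nodes k_j yield
   V^n prod_j 1 / (1 + k_j V), and the resulting Newton expansion of 1 / (1 + K V) converges
   geometrically when K lies below the nodes (larger K reduce to this case through V |-> 2 / V).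
   Hence every logistic step of slope beta, at any position, is uniformly approximable, and a
   staircase of such steps, a Riemann sum for softplus, approximates ReLU on the range of t over
   the bounded set X. *)

HB.instance Definition _ := Monoid.isComLaw.Build R 0 Rplus
  (fun x y z => esym (Rplus_assoc x y z)) Rplus_comm Rplus_0_l.
HB.instance Definition _ := Monoid.isComLaw.Build R 1 Rmult
  (fun x y z => esym (Rmult_assoc x y z)) Rmult_comm Rmult_1_l.

Lemma Rmult_sum_distr_l (I : Type) (r : seq I) (P : pred I) (F : I -> R) (a : R) :
  a * \big[Rplus/0]_(i <- r | P i) F i = \big[Rplus/0]_(i <- r | P i) (a * F i).
Proof.
apply: (big_ind2 (fun y x => a * x = y)); first exact: Rmult_0_r.
- by move=> y1 y2 x1 x2 <- <-; rewrite Rmult_plus_distr_l.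
- by [].
Qed.

Lemma Rle_sum (I : Type) (r : seq I) (P : pred I) (F G : I -> R) :
  (forall i, F i <= G i) ->
  \big[Rplus/0]_(i <- r | P i) F i <= \big[Rplus/0]_(i <- r | P i) G i.
Proof.
move=> FG; apply: (big_ind2 Rle); [lra | move=> *; lra | by move=> i _].
Qed.

Lemma sum_ge0 (I : Type) (r : seq I) (P : pred I) (F : I -> R) :
  (forall i, 0 <= F i) -> 0 <= \big[Rplus/0]_(i <- r | P i) F i.
Proof.
move=> F0; apply: (big_ind (Rle 0)); [lra | move=> *; lra | by move=> i _].
Qed.

Lemma Rdiv_le_l a b c : 0 < b -> a / b <= c <-> a <= c * b.
Proof.
move=> b0; split=> ab.
- by have := Rmult_le_compat_r b _ _ (Rlt_le _ _ b0) ab; rewrite /Rdiv Rmult_assoc Rinv_l; lra.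
- by apply: (Rmult_le_reg_r b) => //; rewrite /Rdiv Rmult_assoc Rinv_l; lra.
Qed.

Lemma exp_le_compat a b : a <= b -> exp a <= exp b.
Proof. by case=> [ab | ->]; [left; apply: exp_increasing | right]. Qed.

Lemma ln_le_compat a b : 0 < a -> a <= b -> ln a <= ln b.
Proof. by move=> a0; case=> [ab | ->]; [left; apply: ln_increasing | right]. Qed.

Lemma ln3_gt0 : 0 < ln 3.
Proof. by rewrite -ln_1; apply: ln_increasing; lra. Qed.

Section Vectors.
Context {D : nat}.
Implicit Types (x y z u : vec D) (c : R).

Definition vadd x y : vec D := fun i => x i + y i.

Lemma inner_ge0 x : 0 <= inner x x.
Proof. by apply: sum_ge0 => i; apply: Rle_0_sqr. Qed.

Lemma inner_eq0 x : inner x x = 0 -> forall i, x i = 0.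
Proof.
move=> + i; rewrite /inner (bigD1 i) //=; set B := bigop _ _ _ => x0.
have B0 : 0 <= B by apply: sum_ge0 => j; apply: Rle_0_sqr.
by apply: Rsqr_0_uniq; have := Rle_0_sqr (x i); rewrite /Rsqr; nra.
Qed.

Lemma vnorm_ge0 x : 0 <= vnorm x.
Proof. exact: sqrt_pos. Qed.

Lemma vnorm_pow2 x : vnorm x ^ 2 = inner x x.
Proof. by rewrite /vnorm pow2_sqrt //; apply: inner_ge0. Qed.

Lemma vnorm_sub_gt0 x y : x <> y -> 0 < vnorm (vsub x y).
Proof.
move=> xy; case: (vnorm_ge0 (vsub x y)) => // n0; case: xy.
apply: functional_extensionality => i.
have := inner_eq0 (vsub x y); rewrite -vnorm_pow2 -n0 /vsub => /(_ ltac:(ring) i); lra.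
Qed.

Lemma inner_scale_l c x y : inner (vscale c x) y = c * inner x y.
Proof. by rewrite /inner Rmult_sum_distr_l; apply: eq_bigr => i _; rewrite /vscale Rmult_assoc. Qed.

Lemma inner_scale_r c x y : inner x (vscale c y) = c * inner x y.
Proof. by rewrite /inner Rmult_sum_distr_l; apply: eq_bigr => i _; rewrite /vscale; ring. Qed.

Lemma inner_sub_r x y z : inner x (vsub y z) = inner x y - inner x z.
Proof.
have -> : inner x y - inner x z = inner x y + -1 * inner x z by ring.
rewrite /inner Rmult_sum_distr_l -big_split /=.
by apply: eq_bigr => i _; rewrite /vsub; ring.
Qed.

Lemma inner_normalize x : 0 < vnorm x ->
  inner (vscale (/ vnorm x) x) (vscale (/ vnorm x) x) = 1.
Proof.
move=> x0; rewrite inner_scale_l inner_scale_r -vnorm_pow2; field; lra.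
Qed.

Lemma inner_le_half_sum x y : inner x y <= (inner x x + inner y y) / 2.
Proof.
rewrite /Rdiv Rmult_comm Rmult_plus_distr_l /inner !Rmult_sum_distr_l -big_split /=.
apply: Rle_sum => i; have := Rle_0_sqr (x i - y i); rewrite /Rsqr; lra.
Qed.

Lemma inner_sub_le x y z :
  inner (vsub x z) (vsub x z) <= 3 * (inner (vsub x y) (vsub x y) + inner y y + inner z z).
Proof.
rewrite /inner !Rmult_plus_distr_l !Rmult_sum_distr_l -!big_split /=.
apply: Rle_sum => i; rewrite /vsub.
have := Rle_0_sqr (x i - y i - y i); have := Rle_0_sqr (y i + z i);
have := Rle_0_sqr (x i - y i + z i); rewrite /Rsqr; nra.
Qed.

Lemma vnorm_scale c x : vnorm (vscale c x) = Rabs c * vnorm x.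
Proof.
rewrite /vnorm inner_scale_l inner_scale_r -Rmult_assoc sqrt_mult_alt.
- by rewrite -sqrt_Rsqr_abs.
- exact: Rle_0_sqr.
Qed.

Lemma vsub_line x u r1 r2 :
  vsub (vadd x (vscale r2 u)) (vadd x (vscale r1 u)) = vscale (r2 - r1) u.
Proof. by apply: functional_extensionality => i; rewrite /vsub /vadd /vscale; ring. Qed.

Lemma inner_sub_line x y u r :
  inner u (vsub x (vadd y (vscale r u))) = inner u (vsub x y) - r * inner u u.
Proof.
have -> : vsub x (vadd y (vscale r u)) = vsub (vsub x y) (vscale r u).
  by apply: functional_extensionality => i; rewrite /vsub /vadd /vscale; ring.
by rewrite inner_sub_r inner_scale_r.
Qed.

Lemma vsub_vadd_l x y : vsub (vadd x y) x = y.
Proof. by apply: functional_extensionality => i; rewrite /vsub /vadd; ring. Qed.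

Lemma line_inj x u r1 r2 : inner u u = 1 -> r1 <> r2 ->
  vadd x (vscale r1 u) <> vadd x (vscale r2 u).
Proof.
move=> u1 r12 e; have := f_equal vnorm (vsub_line x u r1 r2).
rewrite e vnorm_scale /vnorm u1 sqrt_1 Rmult_1_r.
have -> : forall y, inner (vsub y y) (vsub y y) = 0.
  by move=> y; rewrite /inner big1 // => i _; rewrite /vsub; ring.
by rewrite sqrt_0 => /esym; apply: Rabs_no_R0; lra.
Qed.

End Vectors.

Lemma is_dist_exists {D} (A : vec D -> Prop) z : (exists a, A a) -> exists r, is_dist A z r.
Proof.
move=> [a0 Aa0].
pose E r := exists a, A a /\ r = - vnorm (vsub z a).
have bE : bound E by exists 0 => r [a [_ ->]]; have := vnorm_ge0 (vsub z a); lra.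
have [m [ub lub]] := completeness E bE (ex_intro _ _ (ex_intro _ a0 (conj Aa0 erefl))).
exists (- m); split.
- move=> a Aa; have : - vnorm (vsub z a) <= m by apply: ub; exists a.
  lra.
- move=> e e0; apply: NNPP => far.
  have : m <= m - e; last lra.
  apply: lub => r [a [Aa ->]].
  have : ~ vnorm (vsub z a) < - m + e by move=> near; apply: far; exists a.
  lra.
Qed.

Lemma thicken_near {D} (A : vec D -> Prop) eps a z :
  A a -> vnorm (vsub z a) <= eps -> thicken A eps z.
Proof.
move=> Aa za; have [r dr] := is_dist_exists A z (ex_intro _ a Aa).
by exists r; split => //; have := proj1 dr a Aa; lra.
Qed.

Lemma thicken_bounded {D} (A : vec D -> Prop) eps (y : vec D) : vbounded A ->
  exists C, forall x, thicken A eps x -> inner (vsub x y) (vsub x y) <= C.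
Proof.
move=> [B AB]; exists (3 * ((eps + 1) ^ 2 + B ^ 2 + inner y y)) => x [r [[_ near] reps]].
have [b [Ab xb]] := near 1 Rlt_0_1.
apply: Rle_trans (inner_sub_le x b y) _.
have := vnorm_ge0 (vsub x b); have := vnorm_ge0 b; have := AB b Ab.
rewrite -!vnorm_pow2; nra.
Qed.

Definition inv1p (k v : R) : R := / (1 + k * v).

Lemma inv1p_bounds k v : 0 <= k -> 0 <= v -> 0 < inv1p k v <= 1.
Proof.
move=> k0 v0; rewrite /inv1p; split; first by apply: Rinv_0_lt_compat; nra.
by rewrite -Rinv_1; apply: Rinv_le_contravar; nra.
Qed.

Lemma inv1p_sub a b v : 0 <= a -> 0 <= b -> 0 <= v ->
  inv1p a v - inv1p b v = (b - a) * v * inv1p a v * inv1p b v.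
Proof. by move=> a0 b0 v0; rewrite /inv1p; field; split; nra. Qed.

Lemma inv1p_factor_bounds K k v : 0 <= K <= k -> k <= 1 -> 0 <= v ->
  0 <= (k - K) * v * inv1p k v <= 1 - K.
Proof.
move=> Kk k1 v0; have [i0 _] := inv1p_bounds k v ltac:(lra) v0.
split; first by apply: Rmult_le_pos => //; nra.
have -> : (k - K) * v * inv1p k v = 1 - K - (1 - K + K * v * (1 - k)) * inv1p k v.
  by rewrite /inv1p; field; nra.
have : 0 <= K * v * (1 - k) by apply: Rmult_le_pos; nra.
nra.
Qed.

Lemma inv1p_inv k v : 0 < k -> 0 < v -> inv1p k (2 / v) = 1 - inv1p (/ (2 * k)) v.
Proof. by move=> k0 v0; rewrite /inv1p; field; split; nra. Qed.

Definition node (j : nat) : R := / 2 + / (2 * (INR j + 1)).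

Lemma node_bounds j : / 2 < node j <= 1.
Proof.
rewrite /node; have j0 := pos_INR j; split.
- suff : 0 < / (2 * (INR j + 1)) by lra.
  by apply: Rinv_0_lt_compat; lra.
- suff : / (2 * (INR j + 1)) <= / 2 by lra.
  by apply: Rinv_le_contravar; lra.
Qed.

Lemma node_inj : injective node.
Proof.
move=> i j; rewrite /node => /(Rplus_eq_reg_l _ _ _) /Rinv_eq_reg e.
by apply: INR_eq; lra.
Qed.

Section Approximation.
Context {A : Type} {P : (A -> R) -> Prop}.
Hypothesis P_add : forall f g, P f -> P g -> P (fun x => f x + g x).
Hypothesis P_scale : forall c f, P f -> P (fun x => c * f x).

Lemma P_sub {f g} : P f -> P g -> P (fun x => f x - g x).
Proof.
move=> Pf Pg; have := P_add _ _ (P_scale (-1) _ Pg) Pf.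
by congr P; apply: functional_extensionality => x; ring.
Qed.

Definition approximable (S : A -> Prop) (f : A -> R) : Prop :=
  forall eta, 0 < eta -> exists g, P g /\ forall x, S x -> Rabs (f x - g x) <= eta.

Context {S : A -> Prop}.

Lemma approximable_of {f} : P f -> approximable S f.
Proof. by move=> Pf eta eta0; exists f; split=> // x _; rewrite Rminus_diag Rabs_R0; lra. Qed.

Lemma approximable_add {f g} :
  approximable S f -> approximable S g -> approximable S (fun x => f x + g x).
Proof.
move=> af ag eta eta0.
have [f' [Pf' ff']] := af (eta / 2) ltac:(lra).
have [g' [Pg' gg']] := ag (eta / 2) ltac:(lra).
exists (fun x => f' x + g' x); split=> [|x Sx]; first exact: P_add.
have := ff' x Sx; have := gg' x Sx.
have -> : f x + g x - (f' x + g' x) = (f x - f' x) + (g x - g' x) by ring.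
have := Rabs_triang (f x - f' x) (g x - g' x); lra.
Qed.

Lemma approximable_scale c {f} : approximable S f -> approximable S (fun x => c * f x).
Proof.
move=> af eta eta0; have c1 : 0 < Rabs c + 1 by have := Rabs_pos c; lra.
have [f' [Pf' ff']] := af (eta / (Rabs c + 1)) ltac:(apply: Rdiv_lt_0_compat; lra).
exists (fun x => c * f' x); split=> [|x Sx]; first exact: P_scale.
rewrite -Rmult_minus_distr_l Rabs_mult.
apply: Rle_trans (_ : (Rabs c + 1) * (eta / (Rabs c + 1)) <= eta); last by right; field; lra.
by apply: Rmult_le_compat; [apply: Rabs_pos | apply: Rabs_pos | lra | apply: ff'].
Qed.

Lemma approximable_limit f :
  (forall delta, 0 < delta -> exists g, approximable S g /\
     forall x, S x -> Rabs (f x - g x) <= delta) ->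
  approximable S f.
Proof.
move=> near eta eta0.
have [g [ag fg]] := near (eta / 2) ltac:(lra).
have [g' [Pg' gg']] := ag (eta / 2) ltac:(lra).
exists g'; split=> // x Sx; have := fg x Sx; have := gg' x Sx.
have -> : f x - g' x = (f x - g x) + (g x - g' x) by ring.
have := Rabs_triang (f x - g x) (g x - g' x); lra.
Qed.

Section Interpolation.
Variables (V : A -> R) (k : nat -> R).
Hypothesis V_ge0 : forall x, 0 <= V x.
Hypothesis k_inj : injective k.
Hypothesis P_inv1p_k : forall j, P (fun x => inv1p (k j) (V x)).

(* [V ^ n] times the difference of the products over [m, m + n] and [m + 1, m + n + 1] is
   [k (m + n + 1) - k m] times the term for [n + 1]. *)
Lemma P_inv1p_prod : (forall j, 0 <= k j) -> forall n m,
  P (fun x => V x ^ n * \big[Rmult/1]_(m <= j < m + n.+1) inv1p (k j) (V x)).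
Proof.
move=> k_ge0; elim=> [|n IH] m.
  have := P_inv1p_k m; congr P; apply: functional_extensionality => x.
  by rewrite addn1 big_nat1 /=; ring.
have kmn : k (m + n.+1)%nat - k m <> 0.
  by move=> /Rminus_diag_uniq /k_inj; lia.
have := P_scale (/ (k (m + n.+1)%nat - k m)) _ (P_sub (IH m) (IH m.+1)).
congr P; apply: functional_extensionality => x.
set f := fun j => inv1p (k j) (V x); set Q := \big[Rmult/1]_(m.+1 <= j < m + n.+1) f j.
have -> : \big[Rmult/1]_(m <= j < m + n.+1) f j = f m * Q by rewrite big_ltn //; lia.
have -> : \big[Rmult/1]_(m.+1 <= j < m.+1 + n.+1) f j = Q * f (m + n.+1)%nat.
  by rewrite addSn big_nat_recr //; lia.
have -> : \big[Rmult/1]_(m <= j < m + n.+2) f j = f m * (Q * f (m + n.+1)%nat).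
  by rewrite addnS big_ltn ?big_nat_recr //; lia.
have := inv1p_sub (k m) (k (m + n.+1)%nat) (V x) (k_ge0 _) (k_ge0 _) (V_ge0 x).
rewrite -/(f m) -/(f _) => fmN.
have -> : V x ^ n * (f m * Q) - V x ^ n * (Q * f (m + n.+1)%nat)
  = V x ^ n * Q * (f m - f (m + n.+1)%nat) by ring.
rewrite fmN /=; field; lra.
Qed.

(* Newton expansion of [inv1p K V] at the nodes [k j]: after N steps the remainder [E N] is
   [inv1p K V] times N factors [(k j - K) V inv1p (k j) V], each in [[0, 1 - K]]. *)
Lemma approximable_inv1p_below K : 0 < K -> (forall j, K <= k j <= 1) ->
  approximable S (fun x => inv1p K (V x)).
Proof.
move=> K0 Kk; have k_ge0 j : 0 <= k j by have := Kk j; lra.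
pose f j x := inv1p (k j) (V x).
pose E N x := \big[Rmult/1]_(0 <= j < N) (k j - K) * V x ^ N
  * \big[Rmult/1]_(0 <= j < N) f j x * inv1p K (V x).
have E_S N x : E N.+1 x = E N x * ((k N - K) * V x * f N x).
  by rewrite /E !big_nat_recr //=; ring.
have E_bounds N x : 0 <= E N x <= (1 - K) ^ N.
  elim: N => [|N [E0 E1]].
    by rewrite /E !big_geq //=; have := inv1p_bounds K (V x) ltac:(lra) (V_ge0 x); lra.
  have fN := inv1p_factor_bounds K (k N) (V x) ltac:(have := Kk N; lra) (proj2 (Kk N)) (V_ge0 x).
  rewrite E_S /= /f (Rmult_comm (1 - K)); split; first by apply: Rmult_le_pos; lra.
  by apply: Rmult_le_compat; lra.
have remainder N : exists g, P g /\ forall x, inv1p K (V x) - g x = E N x.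
  elim: N => [|N [g [Pg gE]]].
    exists (fun x => 0 * f 0%nat x); split; first exact: P_scale 0 _ (P_inv1p_k 0).
    by move=> x; rewrite /E !big_geq //=; ring.
  exists (fun x => g x + \big[Rmult/1]_(0 <= j < N) (k j - K)
    * (V x ^ N * \big[Rmult/1]_(0 <= j < 0 + N.+1) f j x)).
  split; first by apply: P_add => //; apply: P_scale; apply: P_inv1p_prod.
  move=> x; rewrite E_S big_nat_recr //= Rminus_plus_distr gE /E /f.
  set c := \big[Rmult/1]_(0 <= j < N) (k j - K).
  set Pi := \big[Rmult/1]_(0 <= j < N) inv1p (k j) (V x).
  have -> : c * V x ^ N * Pi * inv1p K (V x) - c * (V x ^ N * (Pi * inv1p (k N) (V x)))
    = c * V x ^ N * Pi * (inv1p K (V x) - inv1p (k N) (V x)) by ring.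
  by rewrite inv1p_sub //; [ring | lra].
have K1 : K <= 1 by have := Kk 0%nat; lra.
move=> eta eta0; have [N N_small] := pow_lt_1_zero (1 - K) ltac:(rewrite Rabs_pos_eq; lra) eta eta0.
have [g [Pg gE]] := remainder N; exists g; split=> // x _.
have := N_small N (le_n N); have [E0 E1] := E_bounds N x.
by rewrite gE !Rabs_pos_eq; lra.
Qed.

End Interpolation.

(* Nodes in (1/2, 1] cover K < 1/2; K > 1 reduces to that case by
   [inv1p K v = 1 - inv1p (/ (2 K)) (2 / v)]. *)
Lemma approximable_inv1p V : (forall x, 0 < V x) -> P (fun _ => 1) ->
  (forall k, / 2 <= k <= 1 -> P (fun x => inv1p k (V x))) ->
  forall K, 0 < K -> approximable S (fun x => inv1p K (V x)).
Proof.
have below W : (forall x, 0 <= W x) -> (forall k, / 2 <= k <= 1 -> P (fun x => inv1p k (W x))) ->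
    forall K, 0 < K < / 2 -> approximable S (fun x => inv1p K (W x)).
  move=> W0 PW K K2; apply: (approximable_inv1p_below W node) => // [|j||j].
  - exact: node_inj.
  - by apply: PW; have := node_bounds j; lra.
  - lra.
  - by have := node_bounds j; lra.
move=> V0 P1 PV K K0.
case: (Rlt_le_dec K (/ 2)) => [K2 | K2]; first by apply: below => // x; apply: Rlt_le.
case: (Rle_lt_dec K 1) => [K1 | K1]; first by apply: approximable_of; apply: PV; lra.
pose W x := 2 / V x.
have W0 x : 0 <= W x by apply: Rlt_le; apply: Rdiv_lt_0_compat => //; lra.
have PW k : / 2 <= k <= 1 -> P (fun x => inv1p k (W x)).
  move=> k2; have k2' : / 2 <= / (2 * k) <= 1.
    by split; [|rewrite -Rinv_1]; apply: Rinv_le_contravar; lra.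
  have := P_sub P1 (PV _ k2'); congr P.
  by apply: functional_extensionality => x; rewrite inv1p_inv //; lra.
have K2' : 0 < / (2 * K) < / 2.
  split; [apply: Rinv_0_lt_compat | apply: Rinv_lt_contravar]; lra.
have := approximable_add (approximable_of P1) (approximable_scale (-1) (below W W0 PW _ K2')).
congr approximable; apply: functional_extensionality => x.
have := inv1p_inv (/ (2 * K)) (V x) ltac:(lra) (V0 x).
have -> : / (2 * / (2 * K)) = K by field; lra.
rewrite /W; lra.
Qed.

End Approximation.

Arguments approximable {A} P S f.

Definition logistic (z : R) : R := / (1 + exp (- z)).
Definition softplus (z : R) : R := ln (1 + exp z).

Lemma logistic_bounds z : 0 < logistic z <= 1.
Proof.
have := exp_pos (- z); rewrite /logistic => ez; split; first by apply: Rinv_0_lt_compat; lra.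
by rewrite -Rinv_1; apply: Rinv_le_contravar; lra.
Qed.

Lemma logistic_le a b : a <= b -> logistic a <= logistic b.
Proof.
move=> ab; have := exp_pos (- b); rewrite /logistic => eb; apply: Rinv_le_contravar; first lra.
by apply: Rplus_le_compat_l; apply: exp_le_compat; lra.
Qed.

Lemma tanh_logistic z : tanh z + 1 = 2 * logistic (2 * z).
Proof.
rewrite /tanh /sinh /cosh /logistic.
have -> : exp (- (2 * z)) = exp (- z) * exp (- z) by rewrite -exp_plus; congr exp; ring.
have := exp_pos z; have := exp_pos (- z); rewrite exp_Ropp => ? ?; field; nra.
Qed.

Lemma tanh_opp z : tanh (- z) = - tanh z.
Proof.
rewrite /tanh /sinh /cosh Ropp_involutive.
by have := exp_pos z; have := exp_pos (- z); move=> ? ?; field; lra.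
Qed.

Lemma derivable_pt_lim_softplus z : derivable_pt_lim softplus z (logistic z).
Proof.
have -> : logistic z = / (1 + exp z) * (0 + exp z).
  by rewrite /logistic exp_Ropp; have := exp_pos z; move=> ?; field; lra.
apply: (derivable_pt_lim_comp (fun x => 1 + exp x) ln).
- exact: derivable_pt_lim_plus (derivable_pt_lim_const 1 z) (derivable_pt_lim_exp z).
- by apply: derivable_pt_lim_ln; have := exp_pos z; lra.
Qed.

Lemma softplus_sub_bounds a b : a <= b ->
  (b - a) * logistic a <= softplus b - softplus a <= (b - a) * logistic b.
Proof.
case=> [ab | <-]; last by rewrite !Rminus_diag !Rmult_0_l; lra.
have [c [-> ac]] := MVT_cor2 softplus logistic a b ab (fun c _ => derivable_pt_lim_softplus c).
by have := logistic_le a c; have := logistic_le c b; split; nra.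
Qed.

Lemma softplus_relu_bounds z : 0 <= softplus z - relu z <= ln 2.
Proof.
rewrite /softplus /relu; have ez := exp_pos z.
have [z0 | z0] := Rle_dec 0 z.
- rewrite Rmax_left //.
  have -> : ln (1 + exp z) - z = ln (1 + exp (- z)).
    rewrite -{2}(ln_exp z) -[_ - ln _]/(_ + - ln _) -ln_Rinv ?exp_pos // -ln_mult;
      try apply: Rinv_0_lt_compat; try lra.
    by congr ln; rewrite exp_Ropp; field; lra.
  have e1 : exp (- z) <= 1 by rewrite -exp_0; apply: exp_le_compat; lra.
  have e0 := exp_pos (- z); rewrite -ln_1; split; apply: ln_le_compat; lra.
- rewrite Rmax_right; last lra.
  have e1 : exp z <= 1 by rewrite -exp_0; apply: exp_le_compat; lra.
  rewrite Rminus_0_r -ln_1; split; apply: ln_le_compat; lra.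
Qed.

(* A Riemann sum of [logistic (beta s)], whose primitive is [softplus (beta s) / beta]. *)
Definition staircase (beta delta : R) (n : nat) (t : R) : R :=
  \big[Rplus/0]_(0 <= j < n) (delta * logistic (beta * (t - INR j * delta))).

Lemma staircase_sandwich beta delta n t : 0 < beta -> 0 < delta ->
  let I := softplus (beta * t) - softplus (beta * (t - INR n * delta)) in
  I <= beta * staircase beta delta n t <=
  I + beta * delta * (logistic (beta * t) - logistic (beta * (t - INR n * delta))).
Proof.
move=> b0 d0 /=; elim: n => [|n IH].
  by rewrite /staircase big_geq // Rmult_0_l Rminus_0_r; lra.
rewrite /staircase big_nat_recr // -/(staircase _ _ _ _) S_INR /=.
have := softplus_sub_bounds (beta * (t - (INR n + 1) * delta)) (beta * (t - INR n * delta)).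
have -> : beta * (t - INR n * delta) - beta * (t - (INR n + 1) * delta) = beta * delta by ring.
move=> /(_ ltac:(nra)); move: IH; rewrite Rmult_plus_distr_l; lra.
Qed.

Lemma staircase_relu beta delta n t : 0 < beta -> 0 < delta -> t <= INR n * delta ->
  Rabs (staircase beta delta n t - relu t) <= delta + ln 2 / beta.
Proof.
move=> b0 d0 tn.
have /= [lo hi] := staircase_sandwich beta delta n t b0 d0.
have [r0 r1] := softplus_relu_bounds (beta * t).
have [n0 n1] := softplus_relu_bounds (beta * (t - INR n * delta)).
have [l0 l1] := logistic_bounds (beta * t).
have [l2 l3] := logistic_bounds (beta * (t - INR n * delta)).
have relu_neg : relu (beta * (t - INR n * delta)) = 0 by rewrite /relu Rmax_right; nra.
have relu_scale : relu (beta * t) = beta * relu t.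
  by rewrite /relu /Rmax; case: Rle_dec; case: Rle_dec => *; nra.
have jump : beta * delta * (logistic (beta * t) - logistic (beta * (t - INR n * delta)))
    <= beta * delta by rewrite -{2}(Rmult_1_r (beta * delta)); apply: Rmult_le_compat_l; nra.
rewrite relu_neg Rminus_0_r relu_scale in n0 n1 r0 r1.
have : Rabs (beta * staircase beta delta n t - beta * relu t) <= beta * delta + ln 2.
  by apply: Rabs_le; lra.
rewrite -Rmult_minus_distr_l Rabs_mult Rabs_pos_eq; last lra.
move=> scaled; apply: (Rmult_le_reg_l beta) => //.
by rewrite Rmult_plus_distr_l (_ : beta * (ln 2 / beta) = ln 2) //; field; lra.
Qed.

Lemma tanh_unit_inv1p h r t : 0 < h ->
  tanh (s1 * (t - r) / h - s2) + 1
  = 2 * inv1p (3 * exp (2 * s1 / h * r)) (exp (- (2 * s1 / h * t))).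
Proof.
move=> h0; rewrite tanh_logistic /logistic /inv1p; congr (2 * / (1 + _)).
have -> : - (2 * (s1 * (t - r) / h - s2)) = ln 3 + 2 * s1 / h * r + - (2 * s1 / h * t).
  by rewrite /s2 /s1; field; lra.
by rewrite !exp_plus exp_ln; lra.
Qed.

Section ReluApproximation.
Variables (P : (R -> R) -> Prop) (eps0 : R).
Hypothesis P_add : forall f g, P f -> P g -> P (fun x => f x + g x).
Hypothesis P_scale : forall c f, P f -> P (fun x => c * f x).
Hypothesis eps0_gt0 : 0 < eps0.
Hypothesis P_unit : forall r1 r2, Rabs r1 <= eps0 -> Rabs r2 <= eps0 -> r1 <> r2 ->
  P (fun t => tanh (s1 * (t - r1) / (r2 - r1) - s2) + 1).

Lemma P_const : P (fun _ => 1).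
Proof.
(* As s1 = 2 s2, the units with anchors (0, eps0) and (eps0, 0) are 1 + tanh z and 1 - tanh z. *)
have e0 : Rabs 0 <= eps0 by rewrite Rabs_R0; lra.
have e1 : Rabs eps0 <= eps0 by rewrite Rabs_pos_eq; lra.
have := P_scale (/ 2) _
  (P_add _ _ (P_unit 0 eps0 e0 e1 ltac:(lra)) (P_unit eps0 0 e1 e0 ltac:(lra))).
congr P; apply: functional_extensionality => t.
have -> : s1 * (t - eps0) / (0 - eps0) - s2 = - (s1 * (t - 0) / (eps0 - 0) - s2).
  by rewrite /s1 /s2; field; lra.
by rewrite tanh_opp; field.
Qed.

Lemma P_inv1p_exp beta k : 2 * s1 / eps0 <= beta -> / 2 <= k <= 1 ->
  P (fun t => inv1p k (exp (- (beta * t)))).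
Proof.
move=> hb k2; have s10 : 0 < s1 := ln3_gt0.
have b0 : 0 < beta by apply: Rlt_le_trans hb; apply: Rdiv_lt_0_compat; lra.
pose h := 2 * s1 / beta; pose r := ln (k / 3) / beta.
have ln_lo : - (2 * s1) <= ln (k / 3).
  have -> : - (2 * s1) = ln (/ 9).
    rewrite ln_Rinv; last lra.
    by rewrite (_ : 9 = 3 * 3) ?ln_mult /s1; lra.
  by apply: ln_le_compat; lra.
have ln_hi : ln (k / 3) <= 0 by rewrite -ln_1; apply: ln_le_compat; lra.
have h0 : 0 < h by apply: Rdiv_lt_0_compat; lra.
have h_le : h <= eps0.
  by apply/(Rdiv_le_l _ _ _ b0); rewrite (Rmult_comm eps0); apply/(Rdiv_le_l _ _ _ eps0_gt0).
have r_le : r <= 0 by apply/(Rdiv_le_l _ _ _ b0); lra.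
have r_ge : - h <= r.
  rewrite /h /r /Rdiv Ropp_mult_distr_l; apply: Rmult_le_compat_r => //.
  by left; apply: Rinv_0_lt_compat.
have r_le' : Rabs r <= eps0 by apply: Rabs_le; lra.
have rh_le : Rabs (r + h) <= eps0 by apply: Rabs_le; lra.
have := P_scale (/ 2) _ (P_unit r (r + h) r_le' rh_le ltac:(lra)).
congr P; apply: functional_extensionality => t.
rewrite (_ : r + h - r = h) ?tanh_unit_inv1p //; last ring.
have -> : 2 * s1 / h = beta by rewrite /h; field; lra.
rewrite /r (_ : beta * (ln (k / 3) / beta) = ln (k / 3)); last by field; lra.
rewrite exp_ln; last lra.
have -> : 3 * (k / 3) = k by field.
by field.
Qed.

Lemma approximable_logistic S beta m : 2 * s1 / eps0 <= beta ->
  approximable P S (fun t => logistic (beta * (t - m))).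
Proof.
move=> hb; have := approximable_inv1p P_add P_scale (S := S) (fun t => exp (- (beta * t)))
  (fun t => exp_pos _) P_const
  (P_inv1p_exp beta ^~ hb) (exp (beta * m)) (exp_pos _).
congr approximable; apply: functional_extensionality => t.
by rewrite /inv1p /logistic -exp_plus; congr (/ (1 + exp _)); ring.
Qed.

Lemma approximable_staircase S beta delta c n : 2 * s1 / eps0 <= beta ->
  approximable P S (fun t => staircase beta delta n (t - c)).
Proof.
move=> hb; elim: n => [|n IH].
  have := approximable_of (P_scale 0 _ P_const) (S := S).
  congr approximable; apply: functional_extensionality => t.
  by rewrite /staircase big_geq // Rmult_0_l.
have := approximable_add P_add IH
  (approximable_scale P_scale delta (approximable_logistic S beta (c + INR n * delta) hb)).
congr approximable; apply: functional_extensionality => t.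
rewrite /staircase big_nat_recr //=; congr (_ + delta * logistic _); ring.
Qed.

Lemma approximable_relu S T c w : (forall t, S t -> t <= T) ->
  approximable P S (fun t => w * relu (t - c)).
Proof.
move=> ST; apply: (approximable_scale P_scale); apply: approximable_limit => delta d0.
have s10 : 0 < s1 := ln3_gt0.
have d2 : 0 < delta / 2 by lra.
pose beta := Rmax (2 * s1 / eps0) (ln 2 / (delta / 2)).
have hb : 2 * s1 / eps0 <= beta := Rmax_l _ _.
have b0 : 0 < beta by apply: Rlt_le_trans hb; apply: Rdiv_lt_0_compat; lra.
have ln2_beta : ln 2 / beta <= delta / 2.
  apply/(Rdiv_le_l _ _ _ b0); rewrite (Rmult_comm (delta / 2)).
  by apply/(Rdiv_le_l _ _ _ d2); apply: Rmax_r.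
have [n Tn] := INR_archimed (delta / 2) (T - c) ltac:(lra).
exists (fun t => staircase beta (delta / 2) n (t - c)); split.
  exact: approximable_staircase.
move=> t St; rewrite Rabs_minus_sym.
have := staircase_relu beta (delta / 2) n (t - c) b0 ltac:(lra) ltac:(have := ST t St; lra).
lra.
Qed.

End ReluApproximation.

Section TanhNetworks.
Context {D : nat}.
Implicit Types (S : vec D -> Prop) (F G : vec D -> R).

Definition tanh_unit (p q x : vec D) : R :=
  tanh (inner (vscale (s1 / (vnorm (vsub q p)) ^ 2) (vsub q p)) (vsub x p) - s2) + 1.

Definition is_tanh_net S F : Prop :=
  exists (M : nat) (x1 x2 : nat -> vec D) (wt : nat -> R),
    (0 < M)%nat /\ (forall i, (i < M)%nat -> S (x2 i) /\ S (x1 i) /\ x2 i <> x1 i) /\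
    forall x, F x = \big[Rplus/0]_(0 <= i < M) (wt i * tanh_unit (x1 i) (x2 i) x).

Lemma is_tanh_net_unit {S p q} : S p -> S q -> q <> p -> is_tanh_net S (tanh_unit p q).
Proof.
move=> Sp Sq qp; exists 1%nat, (fun _ => p), (fun _ => q), (fun _ => 1).
by split=> //; split=> // x; rewrite big_nat1 Rmult_1_l.
Qed.

Lemma is_tanh_net_scale {S} c {F} : is_tanh_net S F -> is_tanh_net S (fun x => c * F x).
Proof.
move=> [M [x1 [x2 [wt [M0 [Sx Fx]]]]]].
exists M, x1, x2, (fun i => c * wt i); split=> //; split=> // x.
by rewrite Fx Rmult_sum_distr_l; apply: eq_bigr => i _; rewrite Rmult_assoc.
Qed.

Lemma is_tanh_net_add {S F G} :
  is_tanh_net S F -> is_tanh_net S G -> is_tanh_net S (fun x => F x + G x).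
Proof.
move=> [M [x1 [x2 [wt [M0 [Sx Fx]]]]]] [N [y1 [y2 [wt' [_ [Sy Gy]]]]]].
pose cat (f g : nat -> _) i := if (i < M)%nat then f i else g (i - M)%nat.
exists (M + N)%nat, (cat _ x1 y1), (cat _ x2 y2), (cat _ wt wt'); split; first lia.
split=> [i iMN | x]; rewrite /cat.
- by case: ifP => iM; [apply: Sx | apply: Sy; lia].
- rewrite Fx Gy (big_cat_nat _ (leq_addr N M)) //=; congr (_ + _).
  + by apply: eq_big_nat => i /andP [_ ->].
  + rewrite -{1}(add0n M) big_addn addKn; apply: eq_big_nat => i _.
    by rewrite ltnNge leq_addl /= addnK.
Qed.

Lemma tanh_unit_line a u r1 r2 x : inner u u = 1 -> r1 <> r2 ->
  tanh_unit (vadd a (vscale r1 u)) (vadd a (vscale r2 u)) x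
  = tanh (s1 * (inner u (vsub x a) - r1) / (r2 - r1) - s2) + 1.
Proof.
move=> u1 r12; rewrite /tanh_unit vsub_line vnorm_scale /vnorm u1 sqrt_1 Rmult_1_r.
rewrite pow2_abs inner_scale_l inner_scale_l inner_sub_line u1.
congr (tanh _ + 1); field; lra.
Qed.

End TanhNetworks.

Lemma is_tanh_net_relu_ridge {D} (X : vec D -> Prop) (a u : vec D) eps0 T c w eta :
  inner u u = 1 -> 0 < eps0 -> (forall r, Rabs r <= eps0 -> X (vadd a (vscale r u))) ->
  (forall x, X x -> inner u (vsub x a) <= T) -> 0 < eta ->
  exists F, is_tanh_net X F /\
    forall x, X x -> Rabs (w * relu (inner u (vsub x a) - c) - F x) <= eta.
Proof.
move=> u1 eps0_gt0 on_line tT eta0.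
pose t x := inner u (vsub x a); pose Q F := is_tanh_net X (fun x => F (t x)).
have Q_unit r1 r2 : Rabs r1 <= eps0 -> Rabs r2 <= eps0 -> r1 <> r2 ->
    Q (fun s => tanh (s1 * (s - r1) / (r2 - r1) - s2) + 1).
  move=> r1_le r2_le r12; have := is_tanh_net_unit (on_line r1 r1_le) (on_line r2 r2_le)
    (not_eq_sym (line_inj a u r1 r2 u1 r12)).
  by congr is_tanh_net; apply: functional_extensionality => x; rewrite tanh_unit_line.
have [F [QF FE]] := approximable_relu Q eps0 (fun f g => is_tanh_net_add)
  (fun c f => is_tanh_net_scale c) eps0_gt0 Q_unit (fun s => s <= T) T c w (fun s => id) eta eta0.
by exists (fun x => F (t x)); split=> // x Xx; apply: FE; apply: tT.
Qed.

Theorem lemma7 (D : nat) (X' : vec D -> Prop) (epsI : R)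
  (hne : exists a, X' a) (hcpt : vcompact X')
  (hreach : exists r, 0 < r /\ forall a m, X' a -> Med X' m -> r <= vnorm (vsub a m))
  (heps0 : 0 < epsI) (heps1 : epsI < 1) (hepsr : reach_gt X' epsI)
  (xh1 xh2 : vec D) (hx1 : thicken X' epsI xh1) (hx2 : thicken X' epsI xh2)
  (hneq : xh1 <> xh2) (wh2 : R) (eps : R) (heps : 0 < eps) :
  let wh1 := vscale (/ vnorm (vsub xh2 xh1)) (vsub xh2 xh1) in
  exists (M : nat) (x1 x2 : nat -> vec D) (wt : nat -> R),
    (0 < M)%nat /\
    (forall i, (i < M)%nat ->
       thicken X' epsI (x2 i) /\ thicken X' epsI (x1 i) /\ x2 i <> x1 i) /\
    forall x, thicken X' epsI x ->
      Rabs (wh2 * relu (inner wh1 (vsub x xh1))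
            - \big[Rplus/0]_(0 <= i < M)
                (wt i * (tanh (inner (vscale (s1 / (vnorm (vsub (x2 i) (x1 i)))^2)
                                          (vsub (x2 i) (x1 i)))
                                   (vsub x (x1 i)) - s2) + 1))) < eps.
Proof.
move=> u; set X := thicken X' epsI.
have u1 : inner u u = 1 by apply/inner_normalize/vnorm_sub_gt0 => e; apply: hneq.
have [a X'a] := hne; have [C XC] := thicken_bounded X' epsI a (proj2 hcpt).
have [|||F [[M [x1 [x2 [wt [M0 [Xx Fx]]]]]] FE]] := is_tanh_net_relu_ridge X a u epsI
  ((1 + C) / 2) (inner u (vsub xh1 a)) wh2 (eps / 2) u1 heps0.
- move=> r r_le; apply: (thicken_near _ _ a) => //.
  by rewrite vsub_vadd_l vnorm_scale /vnorm u1 sqrt_1 Rmult_1_r.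
- by move=> x Xx; have := inner_le_half_sum u (vsub x a); have := XC x Xx; rewrite u1; lra.
- lra.
exists M, x1, x2, wt; split=> //; split=> // x Xx'.
rewrite -[\big[Rplus/0]_(0 <= i < M) _]Fx.
have -> : inner u (vsub x xh1) = inner u (vsub x a) - inner u (vsub xh1 a).
  by rewrite !inner_sub_r; ring.
by have := FE x Xx'; lra.
Qed.
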